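(* Let $q$ be a prime power and $k\ge3$, $u\ge2$, $h\ge1$ integers. Let $U_1,\dots,U_h$ be $u$-dimensional subspaces of $\mathbf F_q^k$ with $U_i\cap U_j=\{0\}$ for $i\ne j$, and assume $q^k-q^{k-1}>h(q^u-1)$. Let $U$ be the set of nonzero vectors of $\mathbf F_q^k$ not in $U_1\cup\dots\cup U_h$, let $\widetilde G$ be a matrix whose columns consist of exactly one representative of each class $\{\lambda\mathbf v:\lambda\in\mathbf F_q^*\}$, $\mathbf v\in U$, and let $\mathbf C$ be the linear code with generator matrix $\widetilde G$. If $h\le q^u$, then $\mathbf C$ is a linear $\big[\frac{(q^k-1)-h(q^u-1)}{q-1},\,k,\,q^{k-1}-hq^{u-1}\big]_q$ code (i.e., its minimum distance equals $q^{k-1}-hq^{u-1}$). *)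

From HB Require Import structures.
From mathcomp Require Import all_boot all_order all_algebra.
Set Implicit Arguments. Unset Strict Implicit. Unset Printing Implicit Defensive.
Import GRing.Theory.
Local Open Scope ring_scope.

(* Vectors of F_q^k are row vectors 'rV[F]_k; subspaces are represented
   (mxalgebra style) by square matrices whose row space is the subspace. *)

Definition outside_subspaces (F : fieldType) (k h : nat)
  (Us : 'I_h -> 'M[F]_k) (v : 'rV[F]_k) : bool :=
  (v != 0) && [forall i, ~~ (v <= Us i)%MS].

Definition colv (F : fieldType) (k n : nat) (G : 'M[F]_(k, n)) (j : 'I_n)
  : 'rV[F]_k := (col j G)^T.

Definition wt (F : fieldType) (n : nat) (c : 'rV[F]_n) : nat :=
  #|[set j : 'I_n | c 0 j != 0]|.

Definition code_min_dist (F : fieldType) (k n : nat) (G : 'M[F]_(k, n))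
  (d : nat) : Prop :=
  (exists x : 'rV[F]_k, x *m G != 0 /\ wt (x *m G) = d) /\
  (forall x : 'rV[F]_k, x *m G != 0 -> (d <= wt (x *m G))%N).

From HB Require Import structures.
From mathcomp Require Import all_boot all_order all_algebra.
From mathcomp Require Import zify.
Import GRing.Theory.
Set Implicit Arguments.
Unset Strict Implicit.
Unset Printing Implicit Defensive.
Local Open Scope ring_scope.

(* For a nonzero message x, the weight of x *m G counts the columns outside
   the hyperplane H = x^perp.  Every nonzero vector outside U_1 u ... u U_h is
   a nonzero multiple of exactly one column, so (q - 1) wt(xG) equals
   #(F^k \ H) - sum_i #(U_i \ H).  Each U_i either lies in H or meets it in a
   hyperplane of U_i, whence wt(xG) = q^(k-1) - m q^(u-1), where m counts the
   U_i not contained in H.  The minimum is attained when H contains no U_i;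
   such an H exists because at most h (q^(k-u) - 1) <= q^k - q^u nonzero x
   annihilate some U_i.  The same count with H replaced by 0 gives the
   length n. *)

Lemma subn_exp_pred (q r : nat) : (0 < r)%N ->
  (q ^ r - q ^ r.-1 = (q - 1) * q ^ r.-1)%N.
Proof. by case: r => // r _; rewrite expnS mulnBl mul1n. Qed.

Lemma ltn_mul_exp_pred (q u k h : nat) : (0 < q)%N -> (0 < u)%N -> (0 < k)%N ->
  (h * (q ^ u - 1) < q ^ k - q ^ k.-1)%N -> (h * q ^ u.-1 < q ^ k.-1)%N.
Proof.
move=> q_gt0 u_gt0 k_gt0; rewrite subn_exp_pred //.
have : ((q - 1) * q ^ u.-1 <= q ^ u - 1)%N.
  by rewrite -subn_exp_pred // leq_sub2l // expn_gt0 q_gt0.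
move: (q ^ u - 1)%N (q ^ u.-1)%N (q ^ k.-1)%N (q - 1)%N => X a b c; nia.
Qed.

Lemma ltn_mul_expB (q u k h : nat) : (1 < q)%N -> (0 < u <= k)%N ->
  (h <= q ^ u)%N -> (h * (q ^ (k - u) - 1) < q ^ k - 1)%N.
Proof.
move=> q_gt1 /andP[u_gt0 u_le_k] h_le.
have -> : (q ^ k = q ^ (k - u) * q ^ u)%N by rewrite -expnD subnK.
have : (1 < q ^ u)%N by rewrite -(expn0 q) ltn_exp2l.
have : (h * (q ^ (k - u) - 1) <= q ^ u * (q ^ (k - u) - 1))%N.
  by rewrite leq_mul2r h_le orbT.
have : (0 < q ^ (k - u))%N by rewrite expn_gt0 ltnW.
move: (q ^ u)%N (q ^ (k - u))%N => a b; nia.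
Qed.

Lemma card_le_sum_cover (T I : finType) (P : pred T) (Q : I -> pred T) :
  (forall x, P x -> exists i, Q i x) ->
  (#|[set x | P x]| <= \sum_i #|[set x | Q i x]|)%N.
Proof.
move=> PQ; rewrite -sum1dep_card.
under [X in (_ <= X)%N]eq_bigr => i _ do rewrite -sum1dep_card big_mkcond.
rewrite exchange_big /= big_mkcond leq_sum // => x _.
case Px: (P x) => //; have [i Qix] := PQ x Px.
by rewrite (bigD1 i) //= Qix.
Qed.

Lemma mx11_eq0 (R : nzRingType) (B : 'M[R]_1) : (B == 0) = (B 0 0 == 0).
Proof.
apply/eqP/eqP => [->|B00]; first by rewrite mxE.
by rewrite [B]mx11_scalar B00 raddf0.
Qed.

Lemma wt0 (F : fieldType) n : wt (0 : 'rV[F]_n) = 0%N.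
Proof. by apply/eqP; rewrite cards_eq0; apply/eqP/setP => j; rewrite !inE mxE eqxx. Qed.

Lemma wt_mulmx_cols (F : fieldType) k n (G : 'M[F]_(k, n)) (x : 'rV[F]_k) :
  wt (x *m G) = #|[set j | ~~ (colv G j <= kermx x^T)%MS]|.
Proof.
apply: eq_card => j; rewrite !inE sub_kermx /colv -trmx_mul trmx_eq0.
by rewrite colE mulmxA -colE mx11_eq0 [in RHS]mxE.
Qed.

Lemma sub_kermx_trC (F : fieldType) m k (A : 'M[F]_(m, k)) (x : 'rV[F]_k) :
  (A <= kermx x^T)%MS = (x <= kermx A^T)%MS.
Proof. by rewrite !sub_kermx -[x in x *m _]trmxK -trmx_mul trmx_eq0. Qed.

Section CountingVectors.
Variables (F : finFieldType) (k : nat).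
Local Notation q := #|F|.

Lemma card_submx m (A : 'M[F]_(m, k)) :
  #|[set v : 'rV[F]_k | (v <= A)%MS]| = (q ^ \rank A)%N.
Proof.
have -> : [set v : 'rV[F]_k | (v <= A)%MS] =
    [set w *m row_base A | w in [set: 'rV[F]_(\rank A)]].
  apply/setP => v; rewrite inE -(eq_row_base A).
  by apply/submxP/imsetP => [[w ->]|[w _ ->]]; exists w.
rewrite card_imset; last exact/row_free_inj/row_base_free.
by rewrite cardsT card_mx mul1n.
Qed.

Lemma card_submx_notin (A K : 'M[F]_k) :
  #|[set v : 'rV[F]_k | (v <= A)%MS && ~~ (v <= K)%MS]| =
  (q ^ \rank A - q ^ \rank (A :&: K))%N.
Proof.
have -> : [set v : 'rV[F]_k | (v <= A)%MS && ~~ (v <= K)%MS] =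
    [set v | (v <= A)%MS] :\: [set v | (v <= A :&: K)%MS].
  by apply/setP => v; rewrite !inE sub_capmx; case: (v <= A)%MS; case: (v <= K)%MS.
rewrite cardsD (setIidPr _) ?card_submx //.
by apply/subsetP => v; rewrite !inE sub_capmx => /andP[].
Qed.

Lemma card_notin (K : 'M[F]_k) :
  #|[set v : 'rV[F]_k | ~~ (v <= K)%MS]| = (q ^ k - q ^ \rank K)%N.
Proof.
have := card_submx_notin 1%:M K; rewrite mxrank1 cap1mx => <-.
by apply: eq_card => v; rewrite !inE submx1.
Qed.

Lemma mxrank_cap_hyperplane m (A : 'M[F]_(m, k)) (x : 'rV[F]_k) : x != 0 ->
  \rank (A :&: kermx x^T) =
  (if (A <= kermx x^T)%MS then \rank A else (\rank A).-1).
Proof.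
move=> x_neq0; set H := kermx x^T.
case: ifP => [/capmx_idPl-> //|AnH].
have rH : \rank H = k.-1 by rewrite mxrank_ker mxrank_tr rank_rV x_neq0 subn1.
have ltH : (\rank H < \rank (A + H)%MS)%N.
  by rewrite (ltn_leqif (mxrank_leqif_sup (addsmxSr A H))) addsmx_sub submx_refl AnH.
have := mxrank_sum_cap A H; have := rank_leq_col (A + H)%MS; rewrite rH in ltH *.
lia.
Qed.

Lemma card_submx_notin_hyperplane (A : 'M[F]_k) (x : 'rV[F]_k) : x != 0 ->
  #|[set v : 'rV[F]_k | (v <= A)%MS && ~~ (v <= kermx x^T)%MS]| =
  ((q - 1) * (if (A <= kermx x^T)%MS then 0 else q ^ (\rank A).-1))%N.
Proof.
move=> x_neq0; rewrite card_submx_notin mxrank_cap_hyperplane //.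
case: ifP => [_|AnH]; first by rewrite subnn muln0.
rewrite subn_exp_pred // lt0n mxrank_eq0.
by apply: contraFN AnH => /eqP->; rewrite sub0mx.
Qed.

Lemma card_notin_hyperplane (x : 'rV[F]_k) : x != 0 ->
  #|[set v : 'rV[F]_k | ~~ (v <= kermx x^T)%MS]| = ((q - 1) * q ^ k.-1)%N.
Proof.
move=> x_neq0; have k_gt0 : (0 < k)%N.
  by have := rank_leq_col x; rewrite rank_rV x_neq0.
by rewrite -subn_exp_pred // card_notin mxrank_ker mxrank_tr rank_rV x_neq0 subn1.
Qed.

Lemma exists_hyperplane_avoiding h (Us : 'I_h -> 'M[F]_k) :
  (\sum_i (q ^ (k - \rank (Us i)) - 1) < q ^ k - 1)%N ->
  exists2 x : 'rV[F]_k, x != 0 & forall i, ~~ (Us i <= kermx x^T)%MS.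
Proof.
move=> few.
suff /exists_inP[x x_neq0 /forallP avoid] :
    [exists (x : 'rV[F]_k | x != 0), [forall i, ~~ (Us i <= kermx x^T)%MS]].
  by exists x.
apply: contraLR few => /exists_inPn all_hit.
have card_ann i :
    #|[set x : 'rV[F]_k | (x <= kermx (Us i)^T)%MS && ~~ (x <= (0 : 'M_k))%MS]| =
    (q ^ (k - \rank (Us i)) - 1)%N.
  by rewrite card_submx_notin capmx0 mxrank0 mxrank_ker mxrank_tr.
rewrite -leqNgt; have := card_notin (0 : 'M[F]_k); rewrite mxrank0 => <-.
under eq_bigr => i _ do rewrite -card_ann.
apply: card_le_sum_cover => x; rewrite submx0 => x_neq0.
have := all_hit x x_neq0; rewrite negb_forall => /existsP[i].
by rewrite negbK sub_kermx_trC => x_ann; exists i; rewrite x_ann x_neq0.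
Qed.
End CountingVectors.

Section ProjectiveSystem.
Variables (F : finFieldType) (k h : nat) (Us : 'I_h -> 'M[F]_k).
Hypothesis Us_disj : forall i j, i != j -> (Us i :&: Us j)%MS == 0.
Variables (n : nat) (G : 'M[F]_(k, n)).
Hypothesis G_cols : forall j, outside_subspaces Us (colv G j).
Hypothesis G_rep : forall v, outside_subspaces Us v ->
  exists! j, exists2 lam : F, lam != 0 & colv G j = lam *: v.
Local Notation q := #|F|.

Lemma outside_subspacesZ (lam : F) v :
  lam != 0 -> outside_subspaces Us (lam *: v) = outside_subspaces Us v.
Proof.
move=> lam_neq0; rewrite /outside_subspaces scaler_eq0 (negbTE lam_neq0).
by congr (_ && _); apply: eq_forallb => i; rewrite (eqmx_scale _ lam_neq0).
Qed.

Lemma colv_scale_inj j j' (lam mu : F) : lam != 0 -> mu != 0 ->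
  lam *: colv G j = mu *: colv G j' -> j = j' /\ lam = mu.
Proof.
move=> lam_neq0 mu_neq0 eq_cols.
have [j0 [_ uniq_j0]] := G_rep (G_cols j').
have eq_j : j = j'.
  rewrite -(uniq_j0 j'); last by exists 1; rewrite ?oner_eq0 ?scale1r.
  apply/esym/uniq_j0; exists (lam^-1 * mu); first by rewrite mulf_neq0 ?invr_eq0.
  by rewrite -scalerA -eq_cols scalerA mulVf ?scale1r.
split=> //; subst j'; apply/eqP; rewrite -subr_eq0; apply/eqP.
have : (lam - mu) *: colv G j == 0 by rewrite scalerBl eq_cols subrr.
case/andP: (G_cols j) => col_neq0 _.
by rewrite scaler_eq0 (negbTE col_neq0) orbF => /eqP.
Qed.

Lemma card_cols_scale_invariant (P : pred 'rV[F]_k) :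
  (forall (lam : F) v, lam != 0 -> P (lam *: v) = P v) ->
  (#|[set j | P (colv G j)]| * (q - 1))%N =
  #|[set v | outside_subspaces Us v && P v]|.
Proof.
move=> PZ; have card_units : #|[set lam : F | lam != 0]| = (q - 1)%N.
  by rewrite subn1 -(cardC1 (0 : F)); apply: eq_card => lam; rewrite !inE.
rewrite -card_units -cardsX -(@card_in_imset _ _ (fun p => p.2 *: colv G p.1)).
  apply: eq_card => v; rewrite [in RHS]inE; apply/imsetP/andP.
    case=> -[j lam]; rewrite !inE /= => /andP[Pj lam_neq0] ->.
    by rewrite outside_subspacesZ // G_cols PZ.
  case=> v_out Pv; have [j [[lam lam_neq0 Ej] _]] := G_rep v_out.
  exists (j, lam^-1); last by rewrite /= Ej scalerA mulVf ?scale1r.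
  by rewrite !inE /= Ej PZ // Pv invr_eq0.
move=> [j lam] [j' mu]; rewrite !inE /= => /andP[_ lam_neq0] /andP[_ mu_neq0].
by case/colv_scale_inj => // -> ->.
Qed.

Lemma card_split_outside (P : pred 'rV[F]_k) : (forall v, P v -> v != 0) ->
  #|[set v | P v]| = (#|[set v | outside_subspaces Us v && P v]| +
                      \sum_i #|[set v | (v <= Us i)%MS && P v]|)%N.
Proof.
move=> P_neq0; rewrite -!sum1dep_card big_mkcond [X in (X + _)%N]big_mkcond.
under [X in (_ + X)%N]eq_bigr => i _ do rewrite -sum1dep_card big_mkcond.
rewrite [X in (_ + X)%N]exchange_big -big_split /=; apply: eq_bigr => v _.
case Pv: (P v); last by rewrite andbF big1 // => i _; rewrite andbF.
have v_neq0 := P_neq0 v Pv; rewrite /outside_subspaces v_neq0 /=.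
under eq_bigr => i _ do rewrite andbT.
case: (boolP [forall i, ~~ (v <= Us i)%MS]) => [/forallP v_out | ].
  by rewrite big1 // => i _; rewrite (negbTE (v_out i)).
rewrite negb_forall => /existsP[i]; rewrite negbK => v_Ui.
rewrite (bigD1 i) //= v_Ui big1 // => j j_neq_i; case: ifP => // v_Uj.
have /eqP Uji0 := Us_disj j_neq_i.
by case/negP: v_neq0; rewrite -submx0 -Uji0 sub_capmx v_Ui v_Uj.
Qed.

Lemma card_cols_notin (K : 'M[F]_k) :
  (#|[set j | ~~ (colv G j <= K)%MS]| * (q - 1) +
   \sum_i #|[set v : 'rV[F]_k | (v <= Us i)%MS && ~~ (v <= K)%MS]| =
   #|[set v : 'rV[F]_k | ~~ (v <= K)%MS]|)%N.
Proof.
rewrite (@card_cols_scale_invariant (fun v => ~~ (v <= K)%MS)); last first.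
  by move=> lam v lam_neq0; rewrite (eqmx_scale _ lam_neq0).
by rewrite [RHS]card_split_outside // => v; apply: contraNneq => ->; rewrite sub0mx.
Qed.

Lemma ncols_count : (n * (q - 1) + \sum_i (q ^ \rank (Us i) - 1) = q ^ k - 1)%N.
Proof.
have := card_cols_notin 0; rewrite card_notin mxrank0 => <-.
have -> : [set j | ~~ (colv G j <= (0 : 'M[F]_k))%MS] = setT.
  by apply/setP => j; rewrite !inE submx0; case/andP: (G_cols j).
by rewrite cardsT card_ord; congr (_ + _)%N; apply: eq_bigr => i _;
  rewrite card_submx_notin capmx0 mxrank0.
Qed.

Lemma wt_mulmx_count (x : 'rV[F]_k) : x != 0 ->
  (wt (x *m G) + \sum_(i | ~~ (Us i <= kermx x^T)%MS) q ^ (\rank (Us i)).-1 =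
   q ^ k.-1)%N.
Proof.
move=> x_neq0; have q_gt1 : (1 < q)%N := card_finNzRing_gt1 F.
have := card_cols_notin (kermx x^T); rewrite card_notin_hyperplane //.
under eq_bigr => i _ do rewrite card_submx_notin_hyperplane // -if_neg.
rewrite -wt_mulmx_cols -big_distrr -big_mkcond /= mulnC -mulnDr => /eqP.
by rewrite eqn_pmul2l ?subn_gt0 // => /eqP.
Qed.

Variable u : nat.
Hypothesis Us_rank : forall i, \rank (Us i) = u.

Lemma ncols_count_uniform : (n * (q - 1) + h * (q ^ u - 1) = q ^ k - 1)%N.
Proof.
have := ncols_count; under eq_bigr => i _ do rewrite Us_rank.
by rewrite big_const_ord iter_addn_0 [(_ * h)%N]mulnC.
Qed.

Lemma wt_mulmx_uniform (x : 'rV[F]_k) : x != 0 ->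
  wt (x *m G) =
  (q ^ k.-1 - #|[set i | ~~ (Us i <= kermx x^T)%MS]| * q ^ u.-1)%N.
Proof.
move=> x_neq0; rewrite -(wt_mulmx_count x_neq0).
by under eq_bigr => i _ do rewrite Us_rank; rewrite sum_nat_cond_const addnK.
Qed.

Lemma wt_mulmx_ge (x : 'rV[F]_k) : x != 0 ->
  (q ^ k.-1 - h * q ^ u.-1 <= wt (x *m G))%N.
Proof.
move=> x_neq0; rewrite wt_mulmx_uniform // leq_sub2l // leq_mul2r.
by rewrite -[X in (_ <= X)%N](card_ord h) max_card orbT.
Qed.

Lemma wt_mulmx_avoiding (x : 'rV[F]_k) : x != 0 ->
  (forall i, ~~ (Us i <= kermx x^T)%MS) ->
  wt (x *m G) = (q ^ k.-1 - h * q ^ u.-1)%N.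
Proof.
move=> x_neq0 avoid; rewrite wt_mulmx_uniform // (_ : [set i | _] = setT).
  by rewrite cardsT card_ord.
by apply/setP => i; rewrite !inE avoid.
Qed.
End ProjectiveSystem.

Theorem theorem2p2 (F : finFieldType) (q k u h : nat)
  (hq : #|F| = q) (hk : (3 <= k)%N) (hu : (2 <= u)%N) (hh : (1 <= h)%N)
  (Us : 'I_h -> 'M[F]_k)
  (hdim : forall i, \rank (Us i) = u)
  (hdisj : forall i j, i != j -> (Us i :&: Us j)%MS == 0)
  (hineq : (h * (q ^ u - 1) < q ^ k - q ^ k.-1)%N)
  (n : nat) (G : 'M[F]_(k, n))
  (hcols : forall j : 'I_n, outside_subspaces Us (colv G j))
  (hrep : forall v : 'rV[F]_k, outside_subspaces Us v ->
     exists! j : 'I_n, exists2 lam : F, lam != 0 & colv G j = lam *: v)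
  (hhq : (h <= q ^ u)%N) :
  n = ((q ^ k - 1 - h * (q ^ u - 1)) %/ (q - 1))%N /\
  \rank G = k /\
  code_min_dist G (q ^ k.-1 - h * q ^ u.-1)%N.
Proof.
subst q; have q_gt1 : (1 < #|F|)%N := card_finNzRing_gt1 F.
have u_le_k : (u <= k)%N by rewrite -(hdim (Ordinal hh)) rank_leq_col.
have d_gt0 : (h * #|F| ^ u.-1 < #|F| ^ k.-1)%N.
  by apply: ltn_mul_exp_pred hineq; lia.
have wt_ge := wt_mulmx_ge hdisj hcols hrep hdim.
have xG_neq0 (x : 'rV[F]_k) : x != 0 -> x *m G != 0.
  by move=> /wt_ge; apply: contraTneq => ->; rewrite wt0; lia.
split.
  have := ncols_count_uniform hdisj hcols hrep hdim => <-.
  by rewrite addnK mulnK // subn_gt0.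
split; first by apply/eqP/inj_row_free => x; apply: contraPeq => /xG_neq0/eqP.
split=> [|x xG_neq0']; last first.
  by apply: wt_ge; apply: contraNneq xG_neq0' => ->; rewrite mul0mx.
have [|x x_neq0 avoid] := exists_hyperplane_avoiding (Us := Us).
  under eq_bigr => i _ do rewrite hdim.
  by rewrite big_const_ord iter_addn_0 mulnC ltn_mul_expB //; lia.
exists x; split; first exact: xG_neq0.
exact: (wt_mulmx_avoiding hdisj hcols hrep hdim).
Qed.
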